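(* Let $\alpha,\beta,\gamma,x\in\mathbb{N}_0$ with $(\alpha,\beta,\gamma,x)\neq(0,0,0,0)$, let $\lambda$ be a nonnegative integer and $n$ a nonnegative integer. Then $$A^{\lambda,x}_n(\alpha,\beta,\gamma)=\sum_{k=0}^{n}\binom{k+\lambda-1}{k}\sum_{i=0}^{n}\binom{n}{i}x^k(-1)^{k+i}\beta^k k!\,S(i,k,\alpha,-\beta,0)\,(\gamma|-\alpha)_{n-i}.$$
   Context: For a number $t$ and $\alpha$, the generalised factorial is $(t|\alpha)_n=\prod_{j=0}^{n-1}(t-j\alpha)$ for $n\ge 1$ and $(t|\alpha)_0=1$. For parameters $\alpha,\beta,\gamma$, the generalised Stirling numbers $S(n,k,\alpha,\beta,\gamma)$ ($0\le k\le n$) are defined by the polynomial identity $(t|\alpha)_n=\sum_{k=0}^{n}S(n,k,\alpha,\beta,\gamma)\,(t-\gamma|\beta)_k$ in the variable $t$, and $S(i,k,\alpha,\beta,\gamma)=0$ for $k>i$. For a nonnegative integer $\lambda$ put $\binom{k+\lambda-1}{k}=\lambda(\lambda+1)\cdots(\lambda+k-1)/k!$ (equal to $1$ for $k=0$). Define $$A^{\lambda,x}_n(\alpha,\beta,\gamma)=\sum_{k=0}^{n}\binom{k+\lambda-1}{k}(-1)^{n+k}\beta^k k!\,S(n,k,\alpha,-\beta,-\gamma)\,x^k .$$ *)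

From mathcomp Require Import all_boot all_order all_algebra.
Set Implicit Arguments. Unset Strict Implicit. Unset Printing Implicit Defensive.
Import Order.TTheory GRing.Theory Num.Theory.
Local Open Scope ring_scope.

Definition gfact (R : comRingType) (t a : R) (n : nat) : R :=
  \prod_(j < n) (t - j%:R * a).

Definition gfact_poly (R : comRingType) (c b : R) (k : nat) : {poly R} :=
  \prod_(j < k) ('X - c%:P - (j%:R * b)%:P).

Definition is_gen_stirling (R : comRingType) (S : nat -> nat -> R) (a b c : R) : Prop :=
  (forall n : nat,
     \prod_(j < n) ('X - (j%:R * a)%:P)
     = \sum_(k < n.+1) S n k *: gfact_poly c b k)
  /\ (forall i k : nat, (i < k)%N -> S i k = 0).

(* binom(k+lambda-1, k) = lambda(lambda+1)...(lambda+k-1)/k!, equal to 1 for k = 0 *)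
Definition multichoose (lam k : nat) : nat := 'C((k + lam).-1, k).

(* A^{lambda,x}_n(alpha,beta,gamma), where S n k stands for S(n,k,alpha,-beta,-gamma) *)
Definition A_poly (S : nat -> nat -> int) (lam : nat) (x beta : int) (n : nat) : int :=
  \sum_(k < n.+1) (multichoose lam k)%:R * (-1) ^+ (n + k) * beta ^+ k
                  * (k`!)%:R * S n k * x ^+ k.

(** Since [t = (t - c) + c], the binomial theorem for generalised factorials
    expands [(t|a)_n] as [sum_i C(n,i) (t - c|a)_i (c|a)_(n-i)]; expanding each
    [(t - c|a)_i] with the Stirling numbers [S(i,k,a,b,0)] and comparing
    coefficients in the basis [(t - c|b)_k] gives
    [S(n,k,a,b,c) = sum_i C(n,i) S(i,k,a,b,0) (c|a)_(n-i)].  Substituting this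
    in [A_n] with [c = -gamma] and [(-gamma|alpha)_m = (-1)^m (gamma|-alpha)_m]
    yields the theorem. *)

From mathcomp Require Import all_boot all_order all_algebra.
From mathcomp Require Import ring zify.

Set Implicit Arguments.
Unset Strict Implicit.
Unset Printing Implicit Defensive.
Import Order.TTheory GRing.Theory Num.Theory.
Local Open Scope ring_scope.

Lemma gfactS (R : comNzRingType) (t a : R) n :
  gfact t a n.+1 = gfact t a n * (t - n%:R * a).
Proof. by rewrite /gfact big_ord_recr. Qed.

Lemma gfactN (R : comNzRingType) (t a : R) n :
  gfact (- t) a n = (-1) ^+ n * gfact t (- a) n.
Proof.
elim: n => [|n IH]; first by rewrite /gfact !big_ord0 mul1r.
by rewrite !gfactS IH exprS; ring.
Qed.

Lemma rmorph_gfact (R S : comNzRingType) (f : {rmorphism R -> S}) (t a : R) n :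
  f (gfact t a n) = gfact (f t) (f a) n.
Proof.
rewrite rmorph_prod; apply: eq_bigr => j _.
by rewrite rmorphB rmorphM rmorph_nat.
Qed.

Lemma sum_binS (R : nzRingType) (G : nat -> R) n :
  \sum_(i < n.+1) 'C(n, i)%:R * (G i.+1 + G i)
  = \sum_(i < n.+2) 'C(n.+1, i)%:R * G i.
Proof.
have shift : \sum_(i < n.+1) 'C(n, i)%:R * G i
             = G 0%N + \sum_(i < n.+1) 'C(n, i.+1)%:R * G i.+1.
  rewrite big_ord_recl bin0 mul1r [in RHS]big_ord_recr /=.
  by rewrite bin_small // mul0r addr0.
under eq_bigr do rewrite mulrDr.
rewrite big_split /= shift [RHS]big_ord_recl bin0 mul1r addrCA -big_split /=.
by congr (_ + _); apply: eq_bigr => i _; rewrite binS natrD mulrDl addrC.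
Qed.

Lemma gfactD (R : comNzRingType) (s t a : R) n :
  gfact (s + t) a n
  = \sum_(i < n.+1) 'C(n, i)%:R * gfact s a i * gfact t a (n - i).
Proof.
elim: n => [|n IH]; first by rewrite big_ord1 /gfact !big_ord0 mulr1 mul1r.
under [RHS]eq_bigr do rewrite -mulrA.
rewrite gfactS IH mulr_suml.
rewrite -(@sum_binS _ (fun i => gfact s a i * gfact t a (n.+1 - i))).
apply: eq_bigr => i _.
have le_in : (i <= n)%N by rewrite -ltnS.
rewrite subSS subSn // !gfactS natrB //; ring.
Qed.

Lemma signr_addn_subn (R : pzRingType) n k i : (i <= n)%N ->
  (-1) ^+ (n + k) * (-1) ^+ (n - i) = (-1) ^+ (k + i) :> R.
Proof.
move=> le_in; rewrite -exprD.
have -> : (n + k + (n - i) = k + i + 2 * (n - i))%N by lia.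
by rewrite exprD exprM sqrrN !expr1n mulr1.
Qed.

Lemma monic_graded_coef_eq0 (R : nzRingType)
    (B : nat -> {poly R}) (e : nat -> R) m :
  (forall k, B k \is monic) -> (forall k, size (B k) = k.+1) ->
  \sum_(k < m) e k *: B k = 0 -> forall k, (k < m)%N -> e k = 0.
Proof.
move=> monB szB; elim: m => [//|m IH]; rewrite big_ord_recr /=.
have top_coef : (\sum_(k < m) e k *: B k + e m *: B m)`_m = e m.
  rewrite coefD coef_sum big1 ?add0r => [|k _].
    have := monicP (monB m); rewrite lead_coefE szB coefZ => ->.
    by rewrite mulr1.
  by rewrite coefZ nth_default ?mulr0 // szB.
move=> sum0; have em0 : e m = 0 by rewrite -top_coef sum0 coef0.
move: sum0; rewrite em0 scale0r addr0 => /IH IHm k.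
by rewrite ltnS leq_eqVlt => /predU1P[-> | /IHm].
Qed.

Lemma gfact_polyE (R : comNzRingType) (c b : R) k :
  gfact_poly c b k = gfact ('X - c%:P) b%:P k.
Proof. by apply: eq_bigr => j _; rewrite polyCM polyC_natr. Qed.

Lemma gfact_poly_comp (R : comNzRingType) (c d b : R) k :
  gfact_poly c b k \Po ('X - d%:P) = gfact_poly (c + d) b k.
Proof.
rewrite !gfact_polyE rmorph_gfact /= comp_polyB comp_polyX !comp_polyC.
by rewrite (addrC c) polyCD opprD addrA.
Qed.

Lemma gfact_poly_XsubC (R : comNzRingType) (c b : R) k :
  gfact_poly c b k = \prod_(j < k) ('X - (c + j%:R * b)%:P).
Proof. by apply: eq_bigr => j _; rewrite polyCD opprD addrA. Qed.

Lemma gfact_poly_monic (R : comNzRingType) (c b : R) k :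
  gfact_poly c b k \is monic.
Proof. by rewrite gfact_poly_XsubC monic_prod_XsubC. Qed.

Lemma size_gfact_poly (R : comNzRingType) (c b : R) k :
  size (gfact_poly c b k) = k.+1.
Proof.
by rewrite gfact_poly_XsubC size_prod_XsubC /index_enum -enumT size_enum_ord.
Qed.

Section GenStirling.

Variables (R : comNzRingType) (a b : R).

Lemma gen_stirling_expansion S c i n :
  is_gen_stirling S a b c -> (i <= n)%N ->
  gfact_poly 0 a i = \sum_(k < n.+1) S i k *: gfact_poly c b k.
Proof.
move=> [expS S0] le_in.
have -> : gfact_poly 0 a i = \prod_(j < i) ('X - (j%:R * a)%:P).
  by apply: eq_bigr => j _; rewrite polyC0 subr0.
rewrite expS (big_ord_widen n.+1 (fun k => S i k *: gfact_poly c b k)) //.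
rewrite big_mkcond /=; apply: eq_bigr => k _.
by case: ltnP => // lt_ik; rewrite S0 ?scale0r.
Qed.

Lemma gen_stirling_shift S1 S2 c n k :
  is_gen_stirling S1 a b c -> is_gen_stirling S2 a b 0 -> (k <= n)%N ->
  S1 n k = \sum_(i < n.+1) 'C(n, i)%:R * S2 i k * gfact c a (n - i).
Proof.
move=> hS1 hS2 le_kn.
have shift_term i : (i <= n)%N ->
    'C(n, i)%:R * gfact ('X - c%:P) a%:P i * gfact c%:P a%:P (n - i)
    = \sum_(j < n.+1)
        ('C(n, i)%:R * S2 i j * gfact c a (n - i)) *: gfact_poly c b j.
  move=> le_in; rewrite -gfact_polyE -[c]add0r -gfact_poly_comp add0r.
  rewrite (gen_stirling_expansion hS2 le_in) linear_sum.
  rewrite -rmorph_gfact -polyC_natr.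
  rewrite mulr_sumr mulr_suml; apply: eq_bigr => j _.
  rewrite linearZ /= gfact_poly_comp add0r -mul_polyC.
  by rewrite mulrA mulrAC -!polyCM mul_polyC.
pose T j := \sum_(i < n.+1) 'C(n, i)%:R * S2 i j * gfact c a (n - i).
have exp_shift : gfact_poly 0 a n = \sum_(j < n.+1) T j *: gfact_poly c b j.
  rewrite gfact_polyE polyC0 subr0 -{1}(subrK c%:P 'X) gfactD.
  rewrite (eq_bigr _ (fun (i : 'I_n.+1) _ => shift_term i (leq_ord i))).
  rewrite exchange_big /=.
  by apply: eq_bigr => j _; rewrite scaler_suml.
have coef_diff0 : \sum_(j < n.+1) (S1 n j - T j) *: gfact_poly c b j = 0.
  under eq_bigr do rewrite scalerBl.
  by rewrite sumrB -exp_shift -(gen_stirling_expansion hS1 (leqnn n)) subrr.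
apply/eqP; rewrite -subr_eq0; apply/eqP.
exact: (monic_graded_coef_eq0 (e := fun j => S1 n j - T j)
  (@gfact_poly_monic _ c b) (@size_gfact_poly _ c b) coef_diff0).
Qed.

End GenStirling.

Theorem theorem7 (alpha beta gamma x lam n : nat)
  (S1 S2 : nat -> nat -> int)
  (hnz : (alpha, beta, gamma, x) <> (0%N, 0%N, 0%N, 0%N))
  (hS1 : is_gen_stirling S1 (alpha%:R) (- beta%:R) (- gamma%:R))
  (hS2 : is_gen_stirling S2 (alpha%:R) (- beta%:R) 0) :
  A_poly S1 lam x%:R beta%:R n
  = \sum_(k < n.+1) (multichoose lam k)%:R *
      \sum_(i < n.+1) ('C(n, i))%:R * (x%:R) ^+ k * (-1) ^+ (k + i)
          * (beta%:R) ^+ k * (k`!)%:R * S2 i k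
          * gfact (gamma%:R) (- alpha%:R) (n - i).
Proof.
rewrite /A_poly; apply: eq_bigr => k _.
rewrite (gen_stirling_shift hS1 hS2 (leq_ord k)) -!mulrA; congr (_ * _).
rewrite mulr_suml !mulr_sumr; apply: eq_bigr => i _.
by rewrite gfactN -(signr_addn_subn _ k (leq_ord i)); ring.
Qed.
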